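(* For any function $q:\mathbb{N}\to\mathbb{R}_{\ge 0}$, there exists a family of online copies-coloring instances $G^t$ such that there is no randomized online algorithm for online copies coloring that is $(\alpha, q(n))$-competitive on this family with $\alpha = o(n/\log^3 n)$, where $n$ is the number of vertices of the underlying graph $G$.
   Context: Given a graph $G=(V,E)$ and an integer $t\ge 1$, the copies graph $G^t$ has vertex set $V\times[t]$ (the $t$ copies $(v,1),\dots,(v,t)$ of each $v\in V$); two copies $(v,i)\neq(v,j)$ of the same vertex are adjacent, and copies $(u,i),(v,j)$ are adjacent whenever $(u,v)\in E$. That is, $G^t$ replaces each vertex by $K_t$ and each edge by $K_{t,t}$. A feasible coloring of $G^t$ is a proper vertex coloring, and $\chi(G^t)$ denotes its chromatic number. In online copies coloring, the vertices $v_1,\dots,v_n$ of $G$ arrive one per time step; when $v$ arrives, its edges to previously arrived vertices are revealed, the $t$ copies of $v$ are created in $G^t$ with the induced edges to previously created copies, and each of these $t$ copies must be immediately and irrevocably assigned a color so that the coloring remains proper. The algorithm may be randomized. For a function $q$, an online algorithm is $(\alpha,q(n))$-competitive if the (expected) number of colors it uses is at most $\alpha\cdot\chi(G^t)+q(n)$, where $n=|V(G)|$ (note the additive term depends only on $n$, not on $t$). *)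

From HB Require Import structures.
From mathcomp Require Import all_boot all_order all_algebra.
From mathcomp Require Import all_classical all_reals all_analysis.
Import Order.TTheory GRing.Theory Num.Theory.

(* The underlying graph G has vertex set 'I_n; vertex i is the (i+1)-th *)
(* vertex to arrive (arrival order = index order, w.l.o.g.).           *)
Record instance := Instance {
  inst_n : nat;
  inst_G : rel 'I_inst_n;
  inst_sym : symmetric inst_G;
  inst_irr : irreflexive inst_G;
  inst_t : nat;
  inst_t_pos : 0 < inst_t }.

Set Implicit Arguments. Unset Strict Implicit. Unset Printing Implicit Defensive.

Definition copy_adj n (G : rel 'I_n) t : rel ('I_n * 'I_t) :=
  fun x y => ((x.1 == y.1) && (x.2 != y.2)) || G x.1 y.1.
Arguments copy_adj {n} G t.

Definition proper_coloring n (G : rel 'I_n) t (T : Type)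
  (c : 'I_n * 'I_t -> T) : Prop :=
  forall x y, copy_adj G t x y -> c x <> c y.
Arguments proper_coloring {n} G t {T} c.

Definition colorable n (G : rel 'I_n) t (k : nat) : bool :=
  [exists c : {ffun 'I_n * 'I_t -> 'I_k},
    [forall x, forall y, copy_adj G t x y ==> (c x != c y)]].
Arguments colorable {n} G t k.

(* (For a loopless G, G^t is always (n*t)-colorable, so the search     *)
(* range [0, n*t] suffices; the default n*t is never reached then.)    *)
Definition chi n (G : rel 'I_n) t : nat :=
  \big[minn/(n * t)]_(k < (n * t).+1 | colorable G t k) k.
Arguments chi {n} G t.

Definition inst_chi (I : instance) : nat := chi (inst_G I) (inst_t I).

(* When vertex number k (0-based) arrives, the algorithm sees t and    *)
(* the graph revealed so far, i.e. the subgraph induced on the first   *)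
(* k+1 vertices 'I_k.+1 (the newest vertex being ord_max), given as an *)
(* adjacency table; it outputs the colors (naturals) of the t copies   *)
(* of the new vertex.  Its earlier choices are functions of earlier     *)
(* prefixes, so this captures exactly "immediate and irrevocable"      *)
(* decisions depending only on the revealed information.               *)
Definition online_alg :=
  forall (t k : nat), {ffun 'I_k.+1 * 'I_k.+1 -> bool} -> 'I_t -> nat.

Definition prefix_graph n (G : rel 'I_n) (v : 'I_n)
  : {ffun 'I_v.+1 * 'I_v.+1 -> bool} :=
  [ffun p => G (widen_ord (ltn_ord v) p.1) (widen_ord (ltn_ord v) p.2)].

Definition alg_coloring (A : online_alg) n (G : rel 'I_n) t
  (x : 'I_n * 'I_t) : nat :=
  A t x.1 (prefix_graph G x.1) x.2.
Arguments alg_coloring A {n} G t x.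

Definition valid_alg (A : online_alg) : Prop :=
  forall (I : instance),
    proper_coloring (inst_G I) (inst_t I)
      (alg_coloring A (inst_G I) (inst_t I)).

Definition ncolors (A : online_alg) (I : instance) : nat :=
  size (undup (codom (alg_coloring A (inst_G I) (inst_t I)))).

From HB Require Import structures.
From mathcomp Require Import all_boot all_order all_algebra.
From mathcomp Require Import all_classical all_reals all_analysis.
From mathcomp Require Import measurable_realfun lra.
Import Order.TTheory GRing.Theory Num.Theory.
Set Implicit Arguments. Unset Strict Implicit. Unset Printing Implicit Defensive.

(* The hard instances have the 2^m bit strings as vertices.  On arrival,
   vertex u secretly probes a coordinate h(u), and it is adjacent to every
   later vertex that differs from it at h(u).  Colouring the copies of u by
   (h(u), u_h(u), copy index) is proper, so chi(G^t) <= 2mt.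
   Against an online algorithm, consider a copy of v with colour c: the
   coordinates probed by the earlier vertices of colour c cannot be all m of
   them, for otherwise v would agree everywhere with the latest such vertex.
   The graph revealed before v does not depend on h(v), so a uniformly random
   h(v) avoids these coordinates with probability at least 1/m, and then the
   pair (c, h(v)) is new; each pair is new only once.  Hence on average over h
   the algorithm uses at least 2^m t / m^2 colours, which exceeds
   alpha(n) chi + q(n) at n = 2^m once alpha = o(n / log^3 n) and t is large. *)

Lemma chi_leq_colorable n (G : rel 'I_n) t k :
  colorable G t k -> k <= n * t -> chi G t <= k.
Proof.
move=> Gk; rewrite -ltnS => klt; rewrite /chi -minEnat.
exact: (@bigmin_le_cond _ nat _ (n * t) (Ordinal klt) _ (fun i => nat_of_ord i) Gk).
Qed.

Lemma card_ffun_leq_sum_notin (D : finType) (m : nat) (v : D)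
    (K : {ffun D -> 'I_m.+1} -> {set 'I_m.+1}) :
  (forall h h' : {ffun D -> 'I_m.+1}, (forall w, w != v -> h w = h' w) -> K h = K h') ->
  (forall h, K h != [set: 'I_m.+1]) ->
  #|{ffun D -> 'I_m.+1}| <= m.+1 * \sum_(h : {ffun D -> 'I_m.+1}) (h v \notin K h).
Proof.
move=> K_local K_neqT.
(* Shifting the value at v by each x : 'Z_(m+1) leaves K h unchanged and makes
   h v run through all values, in particular through one outside K h. *)
pose shift (x : 'I_m.+1) (h : {ffun D -> 'I_m.+1}) : {ffun D -> 'I_m.+1} :=
  [ffun w => if w == v then (h w + x)%R else h w].
have shift_inj x : injective (shift x).
  move=> h1 h2 /ffunP E; apply/ffunP => w; have := E w; rewrite !ffunE.
  by case: eqP => // _ /addIr.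
have K_shift x h : K (shift x h) = K h.
  by apply: K_local => w wv; rewrite ffunE (negbTE wv).
have sum_shift x : \sum_(h : {ffun D -> 'I_m.+1}) (h v \notin K h) =
    \sum_(h : {ffun D -> 'I_m.+1}) (shift x h v \notin K (shift x h)).
  exact: (reindex_inj (shift_inj x)).
have -> : m.+1 * \sum_(h : {ffun D -> 'I_m.+1}) (h v \notin K h) =
    \sum_(x : 'I_m.+1) \sum_(h : {ffun D -> 'I_m.+1}) (shift x h v \notin K (shift x h)).
  by rewrite -(eq_bigr _ (fun x _ => sum_shift x)) sum_nat_const card_ord.
rewrite exchange_big /= -sum1_card; apply: leq_sum => h _.
have /properP [_ [y _ yK]] : K h \proper [set: 'I_m.+1] by rewrite properT.
by rewrite (bigD1 (y - h v)%R) //= K_shift ffunE eqxx addrC subrK yK.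
Qed.

Definition nlabels m := #|{ffun 'I_m -> bool}|.

Lemma nlabelsE m : nlabels m = 2 ^ m.
Proof. by rewrite /nlabels card_ffun card_bool card_ord. Qed.

Definition label m (u : 'I_(nlabels m)) : {ffun 'I_m -> bool} := enum_val u.

Lemma label_inj m : injective (@label m).
Proof. exact: enum_val_inj. Qed.

Definition hidden_graph m (h : {ffun 'I_(nlabels m) -> 'I_m}) : rel 'I_(nlabels m) :=
  fun u w => if u < w then label u (h u) != label w (h u)
             else if w < u then label w (h w) != label u (h w) else false.

Lemma hidden_graph_sym m (h : {ffun 'I_(nlabels m) -> 'I_m}) : symmetric (hidden_graph h).
Proof. by move=> u w; rewrite /hidden_graph; case: ltngtP. Qed.

Lemma hidden_graph_irr m (h : {ffun 'I_(nlabels m) -> 'I_m}) : irreflexive (hidden_graph h).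
Proof. by move=> u; rewrite /hidden_graph ltnn. Qed.

Definition hidden_instance m (h : {ffun 'I_(nlabels m) -> 'I_m}) t (t_gt0 : 0 < t)
  : instance :=
  @Instance _ _ (hidden_graph_sym h) (hidden_graph_irr h) t t_gt0.

Lemma hidden_graph_nonedge m (h : {ffun 'I_(nlabels m) -> 'I_m}) (u w : 'I_(nlabels m)) :
  u < w -> ~~ hidden_graph h u w -> label u (h u) = label w (h u).
Proof. by rewrite /hidden_graph => ->; move/negbNE/eqP. Qed.

Lemma colorable_hidden_graph m (h : {ffun 'I_(nlabels m) -> 'I_m}) t :
  colorable (hidden_graph h) t #|{: 'I_m * bool * 'I_t}|.
Proof.
apply/existsP; exists [ffun x => enum_rank (h x.1, label x.1 (h x.1), x.2)].
apply/forallP => x; apply/forallP => y; apply/implyP => xy.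
rewrite !ffunE; apply/negP => /eqP/enum_rank_inj [h_eq label_eq copy_eq].
case/orP: xy => [/andP [_]|]; first by rewrite copy_eq eqxx.
rewrite /hidden_graph; case: ltngtP => _ //.
- by rewrite label_eq h_eq eqxx.
- by rewrite -label_eq h_eq eqxx.
Qed.

Lemma chi_hidden_instance m (h : {ffun 'I_(nlabels m) -> 'I_m}) t (t_gt0 : 0 < t) :
  inst_chi (hidden_instance h t_gt0) <= m * 2 * t.
Proof.
have := chi_leq_colorable (colorable_hidden_graph h t).
rewrite !card_prod !card_ord card_bool; apply; rewrite leq_mul2r nlabelsE.
by case: m {h} => [|m]; rewrite ?orbT // expnS mulnC leq_mul2l ltn_expl ?orbT.
Qed.

Section OnlineLowerBound.

Variables (A : online_alg) (A_valid : valid_alg A) (m t : nat) (t_gt0 : 0 < t).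

Local Notation N := (nlabels m.+1).
Local Notation probes := {ffun 'I_N -> 'I_m.+1}.

Definition coloring (h : probes) : 'I_N * 'I_t -> nat := alg_coloring A (hidden_graph h) t.

Lemma coloring_proper (h : probes) x y :
  copy_adj (hidden_graph h) t x y -> coloring h x <> coloring h y.
Proof. exact: A_valid (hidden_instance h t_gt0) x y. Qed.

Lemma coloring_nonedge (h : probes) u w i j :
  coloring h (u, i) = coloring h (w, j) -> ~~ hidden_graph h u w.
Proof.
move=> same; apply/negP => uw.
by apply: (@coloring_proper h (u, i) (w, j)); rewrite // /copy_adj /= uw orbT.
Qed.

Lemma coloring_local (h h' : probes) (v u : 'I_N) i :
  (forall w : 'I_N, w < v -> h w = h' w) -> u <= v ->
  coloring h (u, i) = coloring h' (u, i).
Proof.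
move=> hh' uv; rewrite /coloring /alg_coloring /=; congr A.
apply/ffunP => p; rewrite !ffunE /hidden_graph /=.
have p1u : p.1 <= u := ltn_ord p.1; have p2u : p.2 <= u := ltn_ord p.2.
by case: ltngtP => // lt12; rewrite hh' //= (leq_trans lt12) // (leq_trans _ uv).
Qed.

Definition used_coords (h : probes) (v : 'I_N) (c : nat) : {set 'I_m.+1} :=
  h @: [set u : 'I_N | (u < v) && [exists i, coloring h (u, i) == c]].

Lemma used_coords_local (h h' : probes) (v : 'I_N) c :
  (forall w : 'I_N, w < v -> h w = h' w) -> used_coords h v c = used_coords h' v c.
Proof.
move=> hh'; rewrite /used_coords.
have -> : [set u : 'I_N | (u < v) && [exists i, coloring h (u, i) == c]] =
          [set u : 'I_N | (u < v) && [exists i, coloring h' (u, i) == c]].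
  apply/setP => u; rewrite !inE; case uv: (u < v) => //=.
  by apply: eq_existsb => i; rewrite (coloring_local _ hh' (ltnW uv)).
by apply: eq_in_imset => u; rewrite inE => /andP [/hh'].
Qed.

Lemma used_coords_neq_setT (h : probes) (v : 'I_N) i :
  used_coords h v (coloring h (v, i)) != [set: 'I_m.+1].
Proof.
(* Otherwise v agrees everywhere with the latest earlier vertex w of colour c:
   each earlier vertex u of colour c is adjacent to neither v nor w, so both
   agree with u at the coordinate h u. *)
apply/negP => /eqP full; set c := coloring h (v, i) in full.
set S := [set u : 'I_N | (u < v) && [exists j, coloring h (u, j) == c]].
have [u0 u0S] : exists u0, u0 \in S.
  have /imsetP [u uS _] : ord0 \in used_coords h v c by rewrite full inE.
  by exists u.
have [w wS w_last] := @arg_maxnP _ u0 (fun u => u \in S) (fun u : 'I_N => val u) u0S.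
move: (wS); rewrite inE => /andP [wv /existsP [j /eqP cw]].
have agree u : u \in S -> label u (h u) = label v (h u) /\ label u (h u) = label w (h u).
  move=> uS; move: (uS); rewrite inE => /andP [uv /existsP [k /eqP cu]]; split.
    exact/(hidden_graph_nonedge uv)/(@coloring_nonedge h u v k i).
  have [-> // | uw] := eqVneq u w.
  have {}uw : u < w by rewrite ltn_neqAle uw; exact: w_last.
  by apply/(hidden_graph_nonedge uw)/(@coloring_nonedge h u w k j); rewrite cu cw.
suff /label_inj wv_eq : label w = label v by rewrite wv_eq ltnn in wv.
apply/ffunP => k; have /imsetP [u uS ->] : k \in used_coords h v c by rewrite full inE.
by have [<- <-] := agree u uS.
Qed.

Definition fresh (h : probes) (x : 'I_N * 'I_t) : bool :=
  h x.1 \notin used_coords h x.1 (coloring h x).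

Lemma fresh_key_inj (h : probes) :
  {in [pred x | fresh h x] &, injective (fun x => (coloring h x, h x.1))}.
Proof.
move=> [v i] [w j]; rewrite !inE /fresh /= => v_fresh w_fresh [same_col same_h].
have used (u u' : 'I_N) k k' : u < u' -> coloring h (u, k) = coloring h (u', k') ->
    h u \in used_coords h u' (coloring h (u', k')).
  by move=> uu' cu; apply: imset_f; rewrite inE uu'; apply/existsP; exists k; rewrite cu.
case: (ltngtP v w) => [vw | wv | /val_inj vw].
- by rewrite -same_h (used v w i j vw same_col) in w_fresh.
- by rewrite same_h (used w v j i wv (esym same_col)) in v_fresh.
- subst w; case: (eqVneq i j) => [-> // | ij].
  by case: (@coloring_proper h (v, i) (v, j)); rewrite // /copy_adj /= eqxx ij.
Qed.

Lemma card_fresh_leq (h : probes) :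
  #|[set x | fresh h x]| <= ncolors A (hidden_instance h t_gt0) * m.+1.
Proof.
pose key x := (coloring h x, h x.1).
have -> : ncolors A (hidden_instance h t_gt0) * m.+1 =
    size [seq (c, k) | c <- undup (codom (coloring h)), k <- enum 'I_m.+1].
  by rewrite size_allpairs size_enum_ord.
rewrite cardE -(size_map key).
apply: uniq_leq_size.
  rewrite map_inj_in_uniq ?enum_uniq // => x y.
  by rewrite !mem_enum !inE; exact: fresh_key_inj.
move=> _ /mapP [x _ ->]; apply/allpairsP; exists (key x); split => //=.
- by rewrite mem_undup codom_f.
- by rewrite mem_enum.
Qed.

Lemma sum_fresh_geq (v : 'I_N) (i : 'I_t) :
  #|probes| <= m.+1 * \sum_(h : probes) fresh h (v, i).
Proof.
apply: (@card_ffun_leq_sum_notin _ _ v (fun h => used_coords h v (coloring h (v, i)))).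
  move=> h h' hh'; have {}hh' (w : 'I_N) : w < v -> h w = h' w.
    by move=> wv; apply: hh'; rewrite neq_ltn wv.
  by rewrite (coloring_local _ hh' (leqnn v)) (used_coords_local _ hh').
move=> h; exact: used_coords_neq_setT.
Qed.

Lemma sum_ncolors_geq :
  #|probes| * (N * t) <= m.+1 * m.+1 * \sum_(h : probes) ncolors A (hidden_instance h t_gt0).
Proof.
apply: (@leq_trans (m.+1 * \sum_(h : probes) #|[set x | fresh h x]|)).
  have -> : \sum_(h : probes) #|[set x | fresh h x]| =
            \sum_(x : 'I_N * 'I_t) \sum_(h : probes) fresh h x.
    by rewrite exchange_big /=; apply: eq_bigr => h _; rewrite -sum1dep_card big_mkcond.
  have -> : #|probes| * (N * t) = \sum_(x : 'I_N * 'I_t) #|probes|.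
    by rewrite sum_nat_const card_prod !card_ord mulnC.
  rewrite big_distrr; apply: leq_sum => -[v i] _.
  exact: sum_fresh_geq.
rewrite -mulnA leq_pmul2l // big_distrr /=.
by apply: leq_sum => h _; rewrite mulnC card_fresh_leq.
Qed.

End OnlineLowerBound.

Local Open Scope ring_scope.
Local Open Scope classical_set_scope.

Lemma exists_ge_average (R : realDomainType) (I : finType) (i0 : I)
    (f : I -> \bar R) (b : R) :
  (forall i, (0 <= f i)%E) -> ((#|I|%:R * b)%:E <= \sum_i f i)%E ->
  exists i, (b%:E <= f i)%E.
Proof.
move=> f_ge0 avg_le; set j := [arg max_(i > i0) f i]%O.
have f_le i : (f i <= f j)%E.
  by rewrite /j; case: (Order.TotalTheory.arg_maxP f (isT : predT i0)) => k _; apply.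
exists j; have := f_ge0 j; case fj: (f j) => [r | | //] _; last exact: leey.
have : ((#|I|%:R * b)%:E <= (#|I|%:R * r)%:E)%E.
  have sum_le : (\sum_i f i <= \sum_(i : I) r%:E)%E by apply: lee_sum => i _; rewrite -fj.
  apply: (le_trans avg_le); apply: (le_trans sum_le).
  by rewrite sumEFin sumr_const lee_fin mulr_natl.
rewrite lee_fin ler_pM2l // ltr0n; apply/card_gt0P; by exists i0.
Qed.

Lemma exists_hard_hidden_instance (R : realType) d (Omega : measurableType d)
    (P : probability Omega R) (A : Omega -> online_alg) :
  (forall w, valid_alg (A w)) ->
  (forall I, measurable_fun setT (fun w => (ncolors (A w) I)%:R : R)) ->
  forall m t (t_gt0 : (0 < t)%N), exists h : {ffun 'I_(nlabels m.+1) -> 'I_m.+1},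
    (((nlabels m.+1)%:R * t%:R / m.+1%:R ^+ 2)%:E <=
       \int[P]_w ((ncolors (A w) (hidden_instance h t_gt0))%:R)%:E)%E.
Proof.
move=> A_valid A_meas m t t_gt0.
apply: (exists_ge_average [ffun=> ord0]) => [h | ].
  by apply: integral_ge0 => w _; rewrite lee_fin.
rewrite -ge0_integral_sum //; last by move=> h; exact/measurable_EFinP/A_meas.
rewrite -[X in (X <= _)%E]mule1 -(probability_setT P) -integral_cst //.
apply: ge0_le_integral => //.
- by move=> w _; rewrite lee_fin mulr_ge0 // divr_ge0.
- by apply: emeasurable_sum => h; exact/measurable_EFinP/A_meas.
move=> w _; rewrite sumEFin lee_fin -natr_sum mulrA ler_pdivrMr ?exprn_gt0 ?ltr0n //.
rewrite -natrX -!natrM ler_nat -mulnn [X in (_ <= X)%N]mulnC.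
exact: (sum_ncolors_geq (A_valid w)).
Qed.

Lemma littleo_n_over_ln3_pow2 (R : realType) (alpha : nat -> R) :
  alpha =o_\oo (fun n : nat => n%:R / (ln (n%:R : R)) ^+ 3) ->
  exists m, `|alpha (2 ^ m.+1)%N| * (4 * m.+1%:R ^+ 3) <= (2 ^ m.+1)%:R.
Proof.
move=> /eqoP alpha_small.
have ln2_gt0 : 0 < ln (2 : R) by rewrite ln_gt0 // ltr1n.
have c_gt0 : 0 < ln (2 : R) ^+ 3 / 4 by rewrite divr_gt0 // exprn_gt0.
have [M _ alpha_le] := alpha_small _ c_gt0.
exists M; have := alpha_le (2 ^ M.+1)%N (ltnW (ltnW (ltn_expl M.+1 (ltnSn 1)))).
rewrite /= natrX lnXn // -[ln _ *+ _]mulr_natr [`|_ / _|]ger0_norm; last first.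
  by rewrite divr_ge0 // exprn_ge0 // mulr_ge0 // ltW.
have scale (l x k : R) : l != 0 -> l ^+ 3 / 4 * (x / (l * k) ^+ 3) = x / (4 * k ^+ 3).
  move=> l_neq0; rewrite exprMn mulf_div [X in _ / X]mulrCA invfM mulrACA.
  by rewrite divff ?mul1r // expf_neq0.
rewrite scale ?gt_eqF //.
by rewrite ler_pdivlMr // mulr_gt0 // exprn_gt0.
Qed.

Lemma competitive_bound_lt (R : realFieldType) (a q chi N m t : R) :
  0 < m -> 0 <= chi -> 0 <= t ->
  `|a| * (4 * m ^+ 3) <= N -> chi <= m * 2 * t -> 2 * m ^+ 2 * q < N * t ->
  a * chi + q < N * t / m ^+ 2.
Proof.
move=> m_gt0 chi_ge0 t_ge0 a_small chi_le q_small.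
have m2_gt0 : 0 < m ^+ 2 by rewrite exprn_gt0.
have a_chi : a * chi <= `|a| * (m * 2 * t).
  apply: le_trans (ler_norm _) _; rewrite normrM (ger0_norm chi_ge0).
  by rewrite ler_wpM2l.
have := ler_wpM2r (ltW m2_gt0) a_chi; have := ler_wpM2r t_ge0 a_small.
rewrite ltr_pdivlMr //; lra.
Qed.

Lemma exists_nat_mul_gt (R : archiFieldType) (x y : R) :
  0 < y -> exists2 t, (0 < t)%N & x < y * t%:R.
Proof.
move=> y_gt0; exists (Num.bound `|x / y|).+1 => //.
rewrite -ltr_pdivrMl // mulrC; apply: le_lt_trans (ler_norm _) _.
by apply: lt_le_trans (archi_boundP (normr_ge0 _)) _; rewrite ler_nat.
Qed.

Theorem theorem2 (R : realType) (q : nat -> R) (q_ge0 : forall n, 0 <= q n) :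
  exists F : set instance,
  forall (d : measure_display) (Omega : measurableType d)
         (P : probability Omega R) (A : Omega -> online_alg),
    (forall w, valid_alg (A w)) ->
    (forall I : instance,
        measurable_fun setT (fun w => (ncolors (A w) I)%:R : R)) ->
    forall alpha : nat -> R,
      alpha =o_\oo (fun n : nat => n%:R / (ln (n%:R : R)) ^+ 3) ->
      exists I : instance, F I /\
        ((alpha (inst_n I) * (inst_chi I)%:R + q (inst_n I))%:E
           < \int[P]_w ((ncolors (A w) I)%:R)%:E)%E.
Proof.
exists setT => d Omega P A A_valid A_meas alpha.
move=> /littleo_n_over_ln3_pow2 [m alpha_small].
rewrite -nlabelsE in alpha_small; set N := nlabels m.+1 in alpha_small *.
have N_gt0 : 0 < N%:R :> R by rewrite ltr0n /N nlabelsE expn_gt0.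
have [t t_gt0 q_small] := exists_nat_mul_gt (2 * m.+1%:R ^+ 2 * q N) N_gt0.
have [h E_large] := exists_hard_hidden_instance P A_valid A_meas m t_gt0.
exists (hidden_instance h t_gt0); split => //.
apply: lt_le_trans E_large; rewrite lte_fin.
apply: competitive_bound_lt => //.
by rewrite -!natrM ler_nat chi_hidden_instance.
Qed.
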